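(* In the setting below, for $z\in\mathbb{Z}/(n)$ let $A_z=\{((t_1,\dots,t_n),(s_1,\dots,s_n))\in T\rtimes_\circ S : t_{z'}=0 \text{ and } s_{z'}=0 \text{ for all } z'\neq z\}$. Then each $A_z$ is a left ideal of $T\rtimes_\circ S$ whose multiplicative group is abelian, and the additive group of $T\rtimes_\circ S$ is the direct sum of the additive groups of the $A_z$. If $\alpha$ is not trivial, then the multiplicative group of $T\rtimes_\circ S$ is metabelian but not abelian. Moreover, if the $A_z$ are finite and of pairwise relatively prime orders, then all Sylow subgroups of the multiplicative group of $T\rtimes_\circ S$ are abelian.
   Context: A left brace is a set $B$ with two operations $+,\cdot$ such that $(B,+)$ is an abelian group, $(B,\cdot)$ is a group and $a(b+c)+a=ab+ac$ for all $a,b,c$; $\lambda_a(b)=ab-a$. A left ideal is a subgroup $L$ of $(B,+)$ with $\lambda_b(L)\subseteq L$ for all $b\in B$. A left brace is trivial if $ab=a+b$ for all $a,b$. For a symmetric bi-additive map $b\colon T\times T\to S$, $\mathrm{O}(T,b)=\{f\in\mathrm{Aut}(T,+): b(f(x),f(y))=b(x,y)\ \forall x,y\}$. Setting: $n>1$; for each $z\in\mathbb{Z}/(n)$, $T_z,S_z$ are trivial left braces, $b_z\colon T_z\times T_z\to S_z$ is symmetric bilinear, and $f^{(z,z')}\colon S_z\to\mathrm{O}(T_{z'},b_{z'})$ ($z,z'\in\mathbb{Z}/(n)$) are group homomorphisms $s\mapsto f^{(z,z')}_s$ with $f^{(z_1,z)}_{s_1}f^{(z_2,z)}_{s_2}=f^{(z_2,z)}_{s_2}f^{(z_1,z)}_{s_1}$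 and $f^{(z,z)}_s=\mathrm{id}$. $T=\prod_z T_z$, $S=\prod_z S_z$, $b(t,t')=(b_z(t_z,t'_z))_z$, and $\alpha_{(s_1,\dots,s_n)}(t_1,\dots,t_n)=(f^{(1,1)}_{s_1}\cdots f^{(n,1)}_{s_n}(t_1),\dots,f^{(1,n)}_{s_1}\cdots f^{(n,n)}_{s_n}(t_n))$; $\alpha$ is trivial means $\alpha_s=\mathrm{id}$ for all $s$. $T\rtimes_\circ S$ is the set $T\times S$ with $(t_1,s_1)+(t_2,s_2)=(t_1+t_2,s_1+s_2+b(t_1,t_2))$ and $(t_1,s_1)(t_2,s_2)=(t_1+\alpha_{s_1}(t_2),s_1+s_2)$; it is a left brace. *)

From HB Require Import structures.
From mathcomp Require Import all_boot all_order all_algebra.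
Unset Printing Implicit Defensive.
Import GRing.Theory.
Local Open Scope ring_scope.

(* (We only use them on structures known to be groups.)                        *)

Definition is_subgroup {G : Type} (op : G -> G -> G) (e : G) (H : G -> Prop) :=
  [/\ H e, (forall x y, H x -> H y -> H (op x y))
    & (forall x y, H x -> op x y = e -> H y)].

Definition abelian_on {G : Type} (op : G -> G -> G) (H : G -> Prop) :=
  forall x y, H x -> H y -> op x y = op y x.

Inductive gen {G : Type} (op : G -> G -> G) (e : G) (X : G -> Prop) : G -> Prop :=
| gen_in x : X x -> gen op e X x
| gen_e : gen op e X e
| gen_op x y : gen op e X x -> gen op e X y -> gen op e X (op x y)
| gen_inv x y : gen op e X x -> op x y = e -> gen op e X y.

(* commutators [x,y] = x^-1 y^-1 x y, i.e. the c with (y x) c = x y *)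
Definition commutators {G : Type} (op : G -> G -> G) : G -> Prop :=
  fun c => exists x y, op (op y x) c = op x y.

Definition derived {G : Type} (op : G -> G -> G) (e : G) : G -> Prop :=
  gen op e (commutators op).

Definition metabelian {G : Type} (op : G -> G -> G) (e : G) :=
  abelian_on op (derived op e).

Definition is_abelian {G : Type} (op : G -> G -> G) := forall x y : G, op x y = op y x.

Definition has_card {G : Type} (P : G -> Prop) (k : nat) :=
  exists g : 'I_k -> G, injective g /\ (forall x, P x <-> exists i, g i = x).

Definition is_sylow {G : Type} (op : G -> G -> G) (e : G) (p : nat) (H : G -> Prop) :=
  [/\ prime p, is_subgroup op e H
    & exists N, has_card (fun _ : G => True) N /\ has_card H (p ^ logn p N)%N].

Section Brace.
Variables (n : nat) (T S : 'I_n -> zmodType).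
Variable b : forall z, T z -> T z -> S z.
Variable f : forall z z' : 'I_n, S z -> T z' -> T z'.

Definition carrier := ((forall z, T z) * (forall z, S z))%type.

Definition alpha (s : forall z, S z) (t : forall z, T z) : forall z, T z :=
  fun z => (\big[(fun g h : T z -> T z => g \o h)/(fun x : T z => x)]_(z' < n)
              f z' z (s z')) (t z).

Definition alpha_trivial := forall s t, alpha s t = t.

Definition badd (x y : carrier) : carrier :=
  (fun z => x.1 z + y.1 z, fun z => x.2 z + y.2 z + b z (x.1 z) (y.1 z)).

Definition bzero : carrier := (fun z => 0, fun z => 0).

Definition bmul (x y : carrier) : carrier :=
  (fun z => x.1 z + alpha x.2 y.1 z, fun z => x.2 z + y.2 z).

(* left ideal: additive subgroup L with lambda_a(L) ⊆ L, where
   lambda_a(x) = a x - a is the unique y with y + a = a x *)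
Definition left_ideal (L : carrier -> Prop) :=
  is_subgroup badd bzero L /\
  (forall a x y, L x -> badd y a = bmul a x -> L y).

Definition Acomp (z : 'I_n) : carrier -> Prop :=
  fun x => forall z', z' != z -> x.1 z' = 0 /\ x.2 z' = 0.

End Brace.

Arguments carrier {n}.
Arguments alpha {n T S}.
Arguments alpha_trivial {n T S}.
Arguments badd {n T S}.
Arguments bzero {n}.
Arguments bmul {n T S}.
Arguments left_ideal {n T S}.
Arguments Acomp {n}.

From HB Require Import structures.
From mathcomp Require Import all_boot all_order all_algebra all_fingroup all_solvable.
From Stdlib Require Import ClassicalEpsilon FunctionalExtensionality.
Import GRing.Theory.
Local Open Scope ring_scope.

(* Since f^{(z,z)} is the identity, alpha_s acts on the z-th coordinate only
   through the s_{z'} with z' <> z; hence alpha_s is the identity on A_z when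
   s is supported at z, so each A_z is an abelian multiplicative subgroup, and
   a left ideal because every coordinate operation is additive.  In (B, .) the
   S-coordinates simply add up, so commutators have trivial S-part, on which
   alpha is trivial: the derived subgroup is abelian.  Finally B is in
   bijection with the product of the A_z, so |B| = prod |A_z|; if these orders
   are pairwise coprime, a prime p divides at most one of them, say |A_z0|,
   and a Sylow p-subgroup of the abelian A_z0 is Sylow in B.  All Sylow
   p-subgroups are conjugate to it, hence abelian; the Sylow theorems are
   applied to the image of B in the permutations of an enumeration of B. *)

Section Enumeration.
Variables (G : Type) (N : nat) (g : 'I_N -> G).
Hypothesis g_inj : injective g.
Hypothesis g_surj : forall x, exists i, g i = x.

Definition enum_index (x : G) : 'I_N :=
  proj1_sig (constructive_indefinite_description _ (g_surj x)).

Lemma enum_indexK x : g (enum_index x) = x.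
Proof. by rewrite /enum_index; case: constructive_indefinite_description. Qed.

Lemma card_of_bijection (F : finType) (h : F -> G) :
  injective h -> (forall x, exists y, h y = x) -> #|F| = N.
Proof.
move=> h_inj h_surj.
have idx_inj : injective (enum_index \o h).
  by move=> y y' /(congr1 g); rewrite /= !enum_indexK => /h_inj.
rewrite -(card_codom idx_inj) -[RHS]card_ord; apply: eq_card => i.
have [y hy] := h_surj (g i); apply/codomP; exists y.
by apply: g_inj; rewrite /= enum_indexK hy.
Qed.

Section RegularRepresentation.
Variables (op : G -> G -> G) (e : G) (inv : G -> G).
Hypothesis opA : forall x y z, op x (op y z) = op (op x y) z.
Hypothesis op1x : forall x, op e x = x.
Hypothesis opx1 : forall x, op x e = x.
Hypothesis opxV : forall x, op x (inv x) = e.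

Definition regular_fun x (i : 'I_N) : 'I_N := enum_index (op (g i) x).

Lemma regular_fun_inj x : injective (regular_fun x).
Proof.
move=> i j /(congr1 g); rewrite !enum_indexK => /(congr1 (op^~ (inv x))).
by rewrite -!opA opxV !opx1 => /g_inj.
Qed.

Definition regular_perm x : {perm 'I_N} := perm (regular_fun_inj x).

Lemma regular_permM x y : regular_perm (op x y) = (regular_perm x * regular_perm y)%g.
Proof. by apply/permP => i; rewrite permM !permE /regular_fun enum_indexK opA. Qed.

Lemma regular_perm1 : regular_perm e = 1%g.
Proof.
by apply/permP => i; rewrite permE perm1 /regular_fun opx1; apply: g_inj; rewrite enum_indexK.
Qed.

Lemma regular_perm_inj : injective regular_perm.
Proof.
move=> x y /permP xy; have [i gi] := g_surj e.
by have := xy i; rewrite !permE /regular_fun gi !op1x => /(congr1 g); rewrite !enum_indexK.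
Qed.

Section Image.
Variables (P : G -> Prop) (k : nat) (gP : 'I_k -> G).
Hypothesis gP_inj : injective gP.
Hypothesis gP_enum : forall x, P x <-> exists i, gP i = x.

Definition regular_image : {set {perm 'I_N}} := [set regular_perm (gP i) | i : 'I_k].

Lemma mem_regular_image x : (regular_perm x \in regular_image) <-> P x.
Proof.
split; first by case/imsetP=> i _ /regular_perm_inj ->; apply/gP_enum; exists i.
by case/gP_enum=> i <-; apply: imset_f.
Qed.

Lemma regular_image_group : is_subgroup op e P -> group_set regular_image.
Proof.
case=> P1 PM _; apply/group_setP; split; first by rewrite -regular_perm1; apply/mem_regular_image.
move=> u v /imsetP[i _ ->] /imsetP[j _ ->]; rewrite -regular_permM.
by apply/mem_regular_image; apply: PM; apply/gP_enum; eexists.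
Qed.

Lemma card_regular_image : #|regular_image| = k.
Proof. by rewrite card_imset ?card_ord // => i j /regular_perm_inj /gP_inj. Qed.

Lemma regular_image_abelian : abelian_on op P -> abelian regular_image.
Proof.
move=> abP; apply/centsP => u /imsetP[i _ ->] v /imsetP[j _ ->].
by rewrite /commute -!regular_permM abP //; apply/gP_enum; eexists.
Qed.

End Image.

Arguments regular_image {k}.
Arguments mem_regular_image {P k gP}.
Arguments regular_image_group {P k gP}.
Arguments regular_image_abelian {P k gP}.

Lemma regular_image_sub k (gP : 'I_k -> G) k' (gQ : 'I_k' -> G) (Q : G -> Prop) :
  (forall x, Q x <-> exists i, gQ i = x) -> (forall i, Q (gP i)) ->
  regular_image gP \subset regular_image gQ.
Proof. by move=> gQ_enum QP; apply/subsetP => u /imsetP[i _ ->]; apply/mem_regular_image. Qed.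

Arguments regular_image_sub {k gP k' gQ Q}.

Lemma abelian_sylow_of_abelian_subgroup p k (A H : G -> Prop) :
  prime p -> is_subgroup op e A -> abelian_on op A -> has_card A k ->
  logn p k = logn p N -> is_subgroup op e H -> has_card H (p ^ logn p N) ->
  abelian_on op H.
Proof.
move=> p_pr subA abA [gA [gA_inj gA_enum]] lognA subH [gH [gH_inj gH_enum]].
have gT_enum : forall x, (fun _ => True) x <-> exists i, g i = x.
  by move=> x; split=> // _; apply: g_surj.
have subT : is_subgroup op e (fun _ => True) by [].
pose GG := Group (regular_image_group gT_enum subT).
pose AA := Group (regular_image_group gA_enum subA).
pose HH := Group (regular_image_group gH_enum subH).
have cardGG : #|GG| = N by rewrite /= card_regular_image.
have [Q sylQ] := Sylow_exists p AA.
have sylQG : (p.-Sylow(GG) Q)%g.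
  rewrite pHallE (subset_trans (pHall_sub sylQ)) ?(regular_image_sub gT_enum) //=.
  by rewrite (card_Hall sylQ) /= card_regular_image // cardGG !p_part lognA.
have sylHG : (p.-Sylow(GG) HH)%g.
  by rewrite pHallE (regular_image_sub gT_enum) //= card_regular_image // cardGG p_part.
have [x _ defHH] := Sylow_trans sylQG sylHG.
have abHH : abelian HH.
  by rewrite defHH abelianJ (abelianS (pHall_sub sylQ)) ?(regular_image_abelian gA_enum).
move=> a c Ha Hc; apply: regular_perm_inj; rewrite !regular_permM.
by apply: (centsP abHH); apply/(mem_regular_image gH_enum).
Qed.

End RegularRepresentation.
End Enumeration.

Lemma logn_prod_pairwise_coprime {I : finType} (i0 : I) {ord : I -> nat} {p} :
  prime p -> (forall i j, i != j -> coprime (ord i) (ord j)) ->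
  exists i1, logn p (\prod_i ord i) = logn p (ord i1).
Proof.
move=> p_pr coprime_ord.
have [i1 not_pdvd] : exists i1, forall i, i != i1 -> ~~ (p %| ord i)%N.
  case: (pickP (fun i => p %| ord i)%N) => [i1 pdvd1 | none]; last by exists i0 => i; rewrite none.
  exists i1 => i ne; apply/negP => pdvd.
  have := coprime_ord i1 i; rewrite eq_sym ne => /(_ isT) /eqP gcd1.
  have : (p %| gcdn (ord i1) (ord i))%N by rewrite dvdn_gcd pdvd1 pdvd.
  by rewrite gcd1 dvdn1 => /eqP p1; rewrite p1 in p_pr.
exists i1; rewrite (bigD1 i1) //= mulnC logn_Gauss //.
apply: (big_ind (coprime p)) => [|m m' | i ne]; first exact: coprimen1.
  by rewrite coprimeMr => -> ->.
by rewrite prime_coprime // not_pdvd.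
Qed.

Lemma addr_idem0 (V : zmodType) (u : V) : u + u = u -> u = 0.
Proof. by move=> uu; apply: (addrI u); rewrite addr0 uu. Qed.

Section Brace.
Variables (n : nat) (T S : 'I_n -> zmodType).
Variable b : forall z, T z -> T z -> S z.
Variable f : forall z z' : 'I_n, S z -> T z' -> T z'.
Hypothesis bDl : forall z (x y w : T z), b z (x + y) w = b z x w + b z y w.
Hypothesis bDr : forall z (x y w : T z), b z w (x + y) = b z w x + b z w y.
Hypothesis fD : forall z z' s (x y : T z'), f z z' s (x + y) = f z z' s x + f z z' s y.
Hypothesis f_bij : forall z z' s, bijective (f z z' s).
Hypothesis fM : forall z z' (s1 s2 : S z) (t : T z'), f z z' (s1 + s2) t = f z z' s1 (f z z' s2 t).
Hypothesis fC : forall z1 z2 z (s1 : S z1) (s2 : S z2) (t : T z),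
  f z1 z s1 (f z2 z s2 t) = f z2 z s2 (f z1 z s1 t).
Hypothesis f_diag : forall z (s : S z) (t : T z), f z z s t = t.

Local Notation B := (carrier T S).
Declare Scope brace_scope.
Local Notation "x * y" := (bmul f x y) : brace_scope.
Local Notation "0" := (bzero T S) : brace_scope.
Delimit Scope brace_scope with B.

Lemma b0l z (y : T z) : b z 0 y = 0.
Proof. by apply: addr_idem0; rewrite -bDl addr0. Qed.

Lemma b0r z (y : T z) : b z y 0 = 0.
Proof. by apply: addr_idem0; rewrite -bDr addr0. Qed.

Lemma f0 z z' (t : T z') : f z z' 0 t = t.
Proof. by have [g _ gK] := f_bij z z' 0; rewrite -{2}(gK t) -[in RHS](addr0 0) fM !gK. Qed.

Definition alpha_at z (s : forall z, S z) : T z -> T z :=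
  \big[(fun g h : T z -> T z => g \o h)/id]_(z' < n) f z' z (s z').

Lemma alphaE s t z : alpha f s t z = alpha_at z s (t z).
Proof. by []. Qed.

Lemma alpha_atD z s (x y : T z) : alpha_at z s (x + y) = alpha_at z s x + alpha_at z s y.
Proof.
apply: (big_rec (fun h : T z -> T z => forall x y, h (x + y) = h x + h y)) => //.
by move=> i h _ hD x' y' /=; rewrite hD fD.
Qed.

Lemma alpha_at0 z s : alpha_at z s 0 = 0.
Proof. by apply: addr_idem0; rewrite -alpha_atD addr0. Qed.

Lemma alpha_atN z s (x : T z) : alpha_at z s (- x) = - alpha_at z s x.
Proof. by apply: (addrI (alpha_at z s x)); rewrite -alpha_atD !subrr alpha_at0. Qed.

Lemma alpha_at_inj z s : injective (alpha_at z s).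
Proof.
apply: (big_rec (fun h : T z -> T z => injective h)) => // i h _ h_inj x y /= hxy.
by apply: h_inj; have [g gK _] := f_bij i z (s i); rewrite -(gK (h x)) -(gK (h y)) hxy.
Qed.

Lemma alpha_at_supported {z s} : (forall z', z' != z -> s z' = 0) -> alpha_at z s =1 id.
Proof.
move=> s_supp; apply: (big_rec (fun h : T z -> T z => h =1 id)) => // i h _ h_id x /=.
by rewrite h_id; case: (eqVneq i z) => [->|ne]; rewrite ?f_diag // s_supp ?f0.
Qed.

(* Since the factors commute (fC), the product of the f^{(z',z)}_{s1 z' + s2 z'}
   splits into the two products. *)
Lemma alpha_atM z s1 s2 x :
  alpha_at z (fun z => s1 z + s2 z) x = alpha_at z s1 (alpha_at z s2 x).
Proof.
pose K (h12 h1 h2 : T z -> T z) := (forall x, h12 x = h1 (h2 x)) /\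
  (forall i (a : S i) x, h1 (f i z a x) = f i z a (h1 x)).
suff [] : K (alpha_at z (fun z => s1 z + s2 z)) (alpha_at z s1) (alpha_at z s2) by [].
apply: big_rec3 => //= i h12 h1 h2 _ [h12E h1C]; split => [y | j a y].
  by rewrite /comp h12E fM -h1C.
by rewrite /comp h1C fC.
Qed.

Lemma carrier_ext (x y : B) :
  (forall z, x.1 z = y.1 z) -> (forall z, x.2 z = y.2 z) -> x = y.
Proof.
case: x y => [x1 x2] [y1 y2] /= e1 e2.
by rewrite (functional_extensionality_dep _ _ e1) (functional_extensionality_dep _ _ e2).
Qed.

Definition binv (x : B) : B :=
  (fun z => - alpha_at z (fun z => - x.2 z) (x.1 z), fun z => - x.2 z).

Lemma bmulA (x y w : B) : (x * (y * w) = (x * y) * w)%B.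
Proof.
apply: carrier_ext => z /=; last by rewrite addrA.
by rewrite !alphaE /= alpha_atD alpha_atM addrA.
Qed.

Lemma bmul0x (x : B) : (0 * x = x)%B.
Proof. by apply: carrier_ext => z /=; rewrite ?add0r // alphaE alpha_at_supported. Qed.

Lemma bmulx0 (x : B) : (x * 0 = x)%B.
Proof. by apply: carrier_ext => z /=; rewrite ?addr0 // alphaE alpha_at0 addr0. Qed.

Lemma bmulxV (x : B) : (x * binv x = 0)%B.
Proof.
apply: carrier_ext => z /=; last by rewrite subrr.
rewrite alphaE alpha_atN -alpha_atM alpha_at_supported ?subrr // => z' _.
by rewrite subrr.
Qed.

Lemma badd_big_Acomp {a : 'I_n -> B} {r : seq 'I_n} z :
  (forall z, Acomp T S z (a z)) -> uniq r ->
  (\big[badd b/0%B]_(i <- r) a i).1 z = (if z \in r then (a z).1 z else 0) /\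
  (\big[badd b/0%B]_(i <- r) a i).2 z = (if z \in r then (a z).2 z else 0).
Proof.
move=> aA; elim: r => [|i r IHr] /=; first by rewrite big_nil.
case/andP=> i_r r_uniq; rewrite big_cons in_cons /badd /=.
have [-> ->] := IHr r_uniq; case: (eqVneq z i) => [->|ne] /=.
  by rewrite (negbTE i_r) b0r !addr0.
by have [-> ->] := aA i z ne; rewrite b0l !add0r addr0.
Qed.

Lemma badd_sum_Acomp {a : 'I_n -> B} z :
  (forall z, Acomp T S z (a z)) ->
  (\big[badd b/0%B]_(i < n) a i).1 z = (a z).1 z /\
  (\big[badd b/0%B]_(i < n) a i).2 z = (a z).2 z.
Proof. by move=> aA; have := badd_big_Acomp z aA (index_enum_uniq _); rewrite mem_index_enum. Qed.

Lemma Acomp_decomposition (x : B) : exists a : 'I_n -> B,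
  (forall z, Acomp T S z (a z)) /\ x = \big[badd b/0%B]_(z < n) a z.
Proof.
pose a z : B := (fun z' => if z' == z then x.1 z' else 0,
                 fun z' => if z' == z then x.2 z' else 0).
have aA z : Acomp T S z (a z) by move=> z' ne; rewrite /= (negbTE ne).
exists a; split => //; apply: carrier_ext => z; have [e1 e2] := badd_sum_Acomp z aA;
  by rewrite ?e1 ?e2 /= eqxx.
Qed.

Lemma Acomp_decomposition_unique {a a' : 'I_n -> B} :
  (forall z, Acomp T S z (a z)) -> (forall z, Acomp T S z (a' z)) ->
  \big[badd b/0%B]_(z < n) a z = \big[badd b/0%B]_(z < n) a' z ->
  forall z, a z = a' z.
Proof.
move=> aA a'A sum_eq z; apply: carrier_ext => z'; case: (eqVneq z' z) => [->|ne].
- by have [<- _] := badd_sum_Acomp z aA; have [<- _] := badd_sum_Acomp z a'A; rewrite sum_eq.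
- by have [-> _] := aA z z' ne; have [-> _] := a'A z z' ne.
- by have [_ <-] := badd_sum_Acomp z aA; have [_ <-] := badd_sum_Acomp z a'A; rewrite sum_eq.
- by have [_ ->] := aA z z' ne; have [_ ->] := a'A z z' ne.
Qed.

Lemma Acomp_left_ideal z : left_ideal b f (Acomp T S z).
Proof.
split; first split.
- by [].
- move=> x y xA yA z' ne /=; have [-> ->] := xA z' ne; have [-> ->] := yA z' ne.
  by rewrite b0l !addr0.
- move=> x y xA xy z' ne.
  move: (congr1 (fun w => w.1 z') xy) (congr1 (fun w => w.2 z') xy) => /= e1 e2.
  have [x1 x2] := xA z' ne; rewrite x1 add0r in e1.
  by rewrite x1 x2 e1 b0l add0r addr0 in e2.
- move=> a x y xA axy z' ne.
  move: (congr1 (fun w => w.1 z') axy) (congr1 (fun w => w.2 z') axy) => /= e1 e2.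
  have [x1 x2] := xA z' ne; rewrite alphaE x1 alpha_at0 addr0 addrC in e1.
  have y1 : y.1 z' = 0 by apply: (addrI (a.1 z')); rewrite e1 addr0.
  split => //; rewrite y1 b0l x2 addr0 addrC in e2.
  by apply: (addrI (a.2 z')); rewrite e2 addr0.
Qed.

Lemma Acomp_alpha_id {z} {x : B} : Acomp T S z x -> alpha_at z x.2 =1 id.
Proof. by move=> xA; apply: alpha_at_supported => z' ne; have [] := xA z' ne. Qed.

Lemma Acomp_mul_abelian z : abelian_on (bmul f) (Acomp T S z).
Proof.
move=> x y xA yA; apply: carrier_ext => z' /=; last by rewrite addrC.
rewrite !alphaE; case: (eqVneq z' z) => [->|ne].
  by rewrite (Acomp_alpha_id xA) (Acomp_alpha_id yA) addrC.
by have [-> _] := xA z' ne; have [-> _] := yA z' ne; rewrite !alpha_at0 addr0.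
Qed.

Lemma Acomp_mul_subgroup z : is_subgroup (bmul f) 0%B (Acomp T S z).
Proof.
split.
- by [].
- move=> x y xA yA z' ne; have [x1 x2] := xA z' ne; have [y1 y2] := yA z' ne.
  by rewrite /= alphaE x1 x2 y1 y2 alpha_at0 !addr0.
- move=> x y xA xy z' ne.
  move: (congr1 (fun w => w.1 z') xy) (congr1 (fun w => w.2 z') xy) => /= e1 e2.
  have [x1 x2] := xA z' ne; rewrite x2 add0r in e2; split => //.
  by rewrite x1 add0r alphaE -(alpha_at0 z' x.2) in e1; apply: alpha_at_inj e1.
Qed.

Lemma derived_S0 x : derived (bmul f) 0%B x -> forall z, x.2 z = 0.
Proof.
elim=> {x} [c [x [y xy]] z | // | x y _ x0 _ y0 z /= | x y _ x0 xy z].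
- move: (congr1 (fun w => w.2 z) xy) => /= xy2.
  by apply: (addrI (y.2 z + x.2 z)); rewrite xy2 addr0 addrC.
- by rewrite x0 y0 addr0.
- by move: (congr1 (fun w => w.2 z) xy) => /=; rewrite x0 add0r.
Qed.

Lemma bmul_metabelian : metabelian (bmul f) 0%B.
Proof.
move=> x y /derived_S0 x0 /derived_S0 y0; apply: carrier_ext => z /=; last by rewrite addrC.
rewrite !alphaE (alpha_at_supported (fun z' _ => x0 z')).
by rewrite (alpha_at_supported (fun z' _ => y0 z')) addrC.
Qed.

Lemma bmul_abelian_alpha_trivial : is_abelian (bmul f) -> alpha_trivial f.
Proof.
move=> ab s t; apply: functional_extensionality_dep => z.
have := congr1 (fun w => w.1 z) (ab (fun z => 0, s) (t, fun z => 0)) => /=.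
by rewrite !alphaE alpha_at0 add0r addr0.
Qed.

Lemma card_carrier {ord : 'I_n -> nat} {N} :
  (forall z, has_card (Acomp T S z) (ord z)) -> has_card (fun _ : B => True) N ->
  N = (\prod_(z < n) ord z)%N.
Proof.
move=> card_A [g [g_inj g_enum]].
have [gA gA_ok] : exists gA : forall z, 'I_(ord z) -> B, forall z,
    injective (gA z) /\ forall x, Acomp T S z x <-> exists i, gA z i = x.
  by exists (fun z => proj1_sig (constructive_indefinite_description _ (card_A z))) => z;
    case: constructive_indefinite_description.
pose h (phi : {dffun forall z, 'I_(ord z)}) := \big[badd b/0%B]_(z < n) gA z (phi z).
have hA phi z : Acomp T S z (gA z (phi z)) by apply/(gA_ok z).2; eexists.
rewrite -(@card_of_bijection _ _ g g_inj (fun x => proj1 (g_enum x) I) _ h).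
- by rewrite card_dep_ffun foldrE big_image; apply: eq_bigr => z _; rewrite card_ord.
- move=> phi phi' /(Acomp_decomposition_unique (hA phi) (hA phi')) gA_eq.
  by apply/ffunP => z; apply: (gA_ok z).1.
move=> x; have [a [aA ->]] := Acomp_decomposition x.
have a_enum z : exists i, gA z i = a z by apply/(gA_ok z).2.
exists [ffun z => proj1_sig (constructive_indefinite_description _ (a_enum z))].
by apply: eq_bigr => z _; rewrite ffunE; case: constructive_indefinite_description.
Qed.

Lemma sylow_abelian_of_coprime_Acomp (ord : 'I_n -> nat) p (H : B -> Prop) :
  (0 < n)%N -> (forall z, has_card (Acomp T S z) (ord z)) ->
  (forall z z', z != z' -> coprime (ord z) (ord z')) ->
  is_sylow (bmul f) 0%B p H -> abelian_on (bmul f) H.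
Proof.
move=> n_gt0 card_A coprime_A [p_pr subH [N [card_B card_H]]].
have [z0 lognN] := logn_prod_pairwise_coprime (Ordinal n_gt0) p_pr coprime_A.
have [g [g_inj g_enum]] := card_B.
apply: (@abelian_sylow_of_abelian_subgroup _ _ g g_inj (fun x => proj1 (g_enum x) I)
  _ _ _ bmulA bmul0x bmulx0 bmulxV _ _ _ _ p_pr (Acomp_mul_subgroup z0)
  (@Acomp_mul_abelian z0) (card_A z0) _ subH card_H).
by rewrite (card_carrier card_A card_B) lognN.
Qed.

End Brace.

Theorem proposition2p3 (n : nat) (T S : 'I_n -> zmodType)
  (b : forall z, T z -> T z -> S z)
  (f : forall z z' : 'I_n, S z -> T z' -> T z') :
  (1 < n)%N ->
  (forall z (x y : T z), b z x y = b z y x) ->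
  (forall z (x y w : T z), b z (x + y) w = b z x w + b z y w) ->
  (forall z (x y w : T z), b z w (x + y) = b z w x + b z w y) ->
  (forall z z' s (x y : T z'), f z z' s (x + y) = f z z' s x + f z z' s y) ->
  (forall z z' s, bijective (f z z' s)) ->
  (forall z z' s (x y : T z'), b z' (f z z' s x) (f z z' s y) = b z' x y) ->
  (forall z z' (s1 s2 : S z) (t : T z'), f z z' (s1 + s2) t = f z z' s1 (f z z' s2 t)) ->
  (forall z1 z2 z (s1 : S z1) (s2 : S z2) (t : T z),
      f z1 z s1 (f z2 z s2 t) = f z2 z s2 (f z1 z s1 t)) ->
  (forall z (s : S z) (t : T z), f z z s t = t) ->
  [/\ (forall z, left_ideal b f (Acomp T S z) /\ abelian_on (bmul f) (Acomp T S z)),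
      (forall x : carrier T S, exists a : 'I_n -> carrier T S,
          (forall z, Acomp T S z (a z)) /\ x = \big[badd b/bzero T S]_(z < n) a z)
      /\ (forall a a' : 'I_n -> carrier T S,
          (forall z, Acomp T S z (a z)) -> (forall z, Acomp T S z (a' z)) ->
          \big[badd b/bzero T S]_(z < n) a z = \big[badd b/bzero T S]_(z < n) a' z ->
          forall z, a z = a' z),
      (~ alpha_trivial f -> metabelian (bmul f) (bzero T S) /\ ~ is_abelian (bmul f))
    & ((exists ord : 'I_n -> nat, (forall z, has_card (Acomp T S z) (ord z)) /\
          (forall z z', z != z' -> coprime (ord z) (ord z'))) ->
       forall (p : nat) (H : carrier T S -> Prop),
         is_sylow (bmul f) (bzero T S) p H -> abelian_on (bmul f) H)].
Proof.
(* Symmetry of b and the invariance of b under f only serve to make B a brace. *)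
move=> n_gt1 _ bDl bDr fD f_bij _ fM fC f_diag; split.
- by move=> z; split; [apply: Acomp_left_ideal | apply: Acomp_mul_abelian].
- split; [exact: Acomp_decomposition | exact: Acomp_decomposition_unique].
- move=> alpha_nontrivial; split; first exact: bmul_metabelian.
  by move=> ab; apply: alpha_nontrivial; apply: bmul_abelian_alpha_trivial ab.
- have n_gt0 := ltnW n_gt1.
  by move=> [ord [card_A coprime_A]] p H; apply: sylow_abelian_of_coprime_Acomp.
Qed.
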